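(* $\mathsf{LeaderElection}\in\mathsf{dMAM}[O(1)]$, where in $\mathsf{LeaderElection}$ each node of the $n$-node communication graph holds an input bit indicating whether it is marked as leader, and the instance is in the language iff exactly one node is marked as leader.
   Context: Distributed interactive proofs (model). An instance consists of a connected communication graph $G=(V,E)$ with $|V|=n$, where each node has a unique identifier of $O(\log n)$ bits, knows $n$, knows its own identifier, its local input (if the problem has local inputs), and the identifiers of its neighbours (with an arbitrary port numbering of its incident edges). A prover, who sees the whole instance, interacts with all nodes in $r$ alternating messages. In a verifier (node) message each node independently samples fresh uniformly random bits and sends them to the prover (public coins). In a prover message the prover sends each node a string. Nodes may additionally exchange the strings they received from the prover with their neighbours in $G$. At the end each node deterministically accepts or rejects as a function of its local information, its own random bits, the strings it received from the prover and those its neighbours received; the instance is accepted iff all nodes accept. The proof size is the maximum number of bits in any single message between the prover and any node. A language $\mathcal L$ (set of instances) is in $\mathsf{dIP}[r,\ell]$ if there is an $r$-message protocol of proof size $\ell=\ell(n)$ such that (completeness) for every instance in $\mathcal L$ some prover makes all nodes accept with probability $>2/3$, and (soundness) for every instance not in $\mathcal L$ and every prover, all nodes accept with probability $<1/3$ (probabilities over the nodes' coins). $\mathsf{dAM}[\ell]$, $\mathsf{dMAM}[\ell]$, $\mathsf{dAMAM}[\ell]$, $\mathsf{dMAMAM}[\ell]$ denote the cases of 2, 3, 4, 5 messages, where the letters indicate who sends each message in order (A = nodes send random coins, M = prover). *)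

(* Model of distributed interactive proofs with 3 messages
   (dMAM: prover, then node coins, then prover), constant proof size. *)
From HB Require Import structures.
From mathcomp Require Import all_boot.
Set Implicit Arguments. Unset Strict Implicit. Unset Printing Implicit Defensive.

(* Well-formed instance on node set 'I_n:
   - n >= 1, e is a simple (symmetric, irreflexive) connected graph;
   - ports v lists the neighbours of v, each exactly once, in the order of an
     (arbitrary) port numbering;
   - id is an injective identifier assignment with O(log n)-bit ids,
     i.e. id v < n ^ c for the fixed constant c. *)
Definition well_formed_instance (c n : nat) (e : rel 'I_n)
    (ports : 'I_n -> seq 'I_n) (id : 'I_n -> nat) : Prop :=
  0 < n /\ symmetric e /\ irreflexive e /\ (forall u v, connect e u v) /\
  (forall v, uniq (ports v) /\ (forall u, (u \in ports v) = e v u)) /\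
  injective id /\ (forall v, id v < n ^ c).

Record view := View {
  v_n : nat;
  v_id : nat;
  v_input : bool;
  v_nbr_ids : seq nat;
  v_coins : seq bool;
  v_msg1 : seq bool;
  v_msg2 : seq bool;
  v_nbr_msgs : seq (seq bool * seq bool)
}.

Record dMAM_protocol := DMAMProtocol {
  coins : nat -> nat;
  decide : view -> bool
}.

Definition coin_space (P : dMAM_protocol) (n : nat) : finType :=
  {ffun 'I_n -> (coins P n).-tuple bool}.

Definition all_accept (P : dMAM_protocol) (n : nat) (ports : 'I_n -> seq 'I_n)
    (id : 'I_n -> nat) (inp : 'I_n -> bool) (m1 : 'I_n -> seq bool)
    (m2 : coin_space P n -> 'I_n -> seq bool) (r : coin_space P n) : bool :=
  [forall v : 'I_n,
     decide P (View n (id v) (inp v) [seq id u | u <- ports v]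
                    (val (r v)) (m1 v) (m2 r v)
                    [seq (m1 u, m2 r u) | u <- ports v])].

(* number of accepting coin outcomes (probability = this / #|coin_space P n|) *)
Definition n_accept (P : dMAM_protocol) (n : nat) (ports : 'I_n -> seq 'I_n)
    (id : 'I_n -> nat) (inp : 'I_n -> bool) (m1 : 'I_n -> seq bool)
    (m2 : coin_space P n -> 'I_n -> seq bool) : nat :=
  #|[pred r : coin_space P n | all_accept ports id inp m1 m2 r]|.

Definition language := forall n : nat,
  rel 'I_n -> ('I_n -> seq 'I_n) -> ('I_n -> nat) -> ('I_n -> bool) -> Prop.

(* Lang \in dMAM[O(1)] (identifiers below n^c): there is a protocol and a
   constant L bounding all messages (coins and honest prover messages),
   uniformly in n, with completeness > 2/3 and soundness < 1/3 against every
   prover. *)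
Definition in_dMAM_O1 (c : nat) (Lang : language) : Prop :=
  exists (L : nat) (P : dMAM_protocol),
    (forall n, coins P n <= L) /\
    forall n (e : rel 'I_n) (ports : 'I_n -> seq 'I_n) (id : 'I_n -> nat)
           (inp : 'I_n -> bool),
      well_formed_instance c e ports id ->
      (Lang n e ports id inp ->
         exists (m1 : 'I_n -> seq bool) (m2 : coin_space P n -> 'I_n -> seq bool),
           [/\ (forall v, size (m1 v) <= L),
               (forall r v, size (m2 r v) <= L) &
               2 * #|coin_space P n| < 3 * n_accept ports id inp m1 m2]) /\
      (~ Lang n e ports id inp ->
         forall (m1 : 'I_n -> seq bool) (m2 : coin_space P n -> 'I_n -> seq bool),
           3 * n_accept ports id inp m1 m2 < #|coin_space P n|).

Definition LeaderElection : language :=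
  fun n _ _ _ inp => #|[pred v : 'I_n | inp v]| = 1.

From HB Require Import structures.
From mathcomp Require Import all_boot zify.
Set Implicit Arguments. Unset Strict Implicit. Unset Printing Implicit Defensive.

(* Every node's two coins form a value c_v in Z/4. The prover labels each node by its
   BFS distance from the leader modulo 3, which lets every other node recognise a
   parent one step closer to the leader; after the coins it sends each node the sum
   y_v of the coins on its parent path and the leader's coin b. Nodes check that b
   agrees across edges, that y_v = c_v + y_parent(v) away from the leader, and that
   y = b = c at the leader; an honest prover for a unique leader always succeeds.
   Without a leader the parent pointers contain a cycle whose coins must then sum to
   0, and with two leaders u, w acceptance forces c_u = c_w. Shifting the coin of a
   single node w by j = 0..3 maps such an event to four disjoint sets of equal size,
   so it has probability at most 1/4. *)

Lemma card_fiber0_le (T : finType) (k : nat) (phi : T -> nat) (g : nat -> T -> T) :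
  (forall j, injective (g j)) ->
  (forall r j, j < k -> phi r = 0 -> phi (g j r) = j) ->
  k * #|[pred r | phi r == 0]| <= #|T|.
Proof.
move=> g_inj phi_g.
pose h (p : 'I_k * {r : T | phi r == 0}) := g p.1 (val p.2).
suff h_inj : injective h.
  by have := leq_card h h_inj; rewrite card_prod card_ord card_sig.
move=> [i [r r0]] [j [s s0]]; rewrite /h /= => E.
have ij : i = j.
  apply: val_inj; rewrite /= -(phi_g r i (ltn_ord i) (eqP r0)).
  by rewrite E (phi_g s j (ltn_ord j) (eqP s0)).
subst j; move/g_inj: E => E; subst s.
by rewrite (bool_irrelevance r0 s0).
Qed.

Lemma iter_minimal_cycle (T : finType) (f : T -> T) (x : T) :
  exists w k, [/\ 0 < k, iter k f w = w & forall t, 0 < t < k -> iter t f w != w].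
Proof.
have /trajectP [i lt_i_ord Ei] := looping_order f x.
pose w := iter i f x.
have w_periodic : exists k, (0 < k) && (iter k f w == w).
  exists (order f x - i); rewrite subn_gt0 lt_i_ord /w -iterD subnK ?(ltnW lt_i_ord) //.
  by rewrite Ei eqxx.
case: (ex_minnP w_periodic) => k /andP [k_gt0 /eqP kw] k_min.
exists w, k; split => // t /andP [t_gt0 t_lt_k]; apply/negP => /eqP tw.
by have := k_min t; rewrite t_gt0 tw eqxx leqNgt t_lt_k => /(_ isT).
Qed.

Section Distance.

Variables (T : finType) (e : rel T) (l : T).
Hypothesis connect_l : forall v, connect e l v.

Definition walk_to (k : nat) (v : T) : bool :=
  [exists p : k.-tuple T, path e l p && (last l p == v)].

Lemma walk_to_exists v : exists k, walk_to k v.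
Proof.
have /connectP [p l_p ->] := connect_l v.
by exists (size p); apply/existsP; exists (in_tuple p); rewrite l_p eqxx.
Qed.

Definition dist (v : T) : nat := ex_minn (walk_to_exists v).

Lemma dist_walk v : walk_to (dist v) v.
Proof. by rewrite /dist; case: ex_minnP. Qed.

Lemma dist_min v k : walk_to k v -> dist v <= k.
Proof. by rewrite /dist; case: ex_minnP => m _; apply. Qed.

Lemma dist_root : dist l = 0.
Proof.
by apply/eqP; rewrite -leqn0; apply: dist_min; apply/existsP; exists [tuple]; rewrite /= eqxx.
Qed.

Lemma dist_edge x y : e x y -> dist y <= (dist x).+1.
Proof.
move=> exy; apply: dist_min; have /existsP [p /andP [l_p /eqP px]] := dist_walk x.
apply/existsP; exists [tuple of rcons p y].
by rewrite rcons_path last_rcons l_p px exy eqxx.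
Qed.

Lemma dist_pred v : v != l -> exists2 u, e u v & (dist u).+1 = dist v.
Proof.
move=> vl; have /existsP [p /andP [l_p /eqP pv]] := dist_walk v.
move: (size_tuple p) l_p pv; case/lastP: (tval p) => [|q u] /=.
  by move=> _ _ lv; rewrite lv eqxx in vl.
rewrite size_rcons rcons_path last_rcons => size_q /andP [l_q equ] uv; subst u.
exists (last l q) => //.
have := dist_edge equ; have : dist (last l q) <= size q.
  by apply: dist_min; apply/existsP; exists (in_tuple q); rewrite l_q eqxx.
lia.
Qed.

End Distance.

Definition val2 (s : seq bool) : nat := nth false s 0 + 2 * nth false s 1.
Definition bits2 (k : nat) : seq bool := [:: odd k; odd k./2].
Definition tuple2 (k : nat) : 2.-tuple bool := [tuple odd k; odd k./2].

Lemma val2_lt4 s : val2 s < 4.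
Proof. by rewrite /val2; case: (nth false s 0); case: (nth false s 1). Qed.

Lemma val2_bits2 k : val2 (bits2 k) = k %% 4.
Proof.
elim: k => // k IH; rewrite -addn1 -modnDml -IH /val2 /= addn1 -uphalfE uphalf_half oddS.
by case: (odd k); rewrite /= ?add0n ?add1n /=; case: (odd k./2).
Qed.

Lemma val2_cat k s : val2 (bits2 k ++ s) = k %% 4.
Proof. exact: val2_bits2. Qed.

Lemma drop2_cat k s : drop 2 (bits2 k ++ s) = s.
Proof. by rewrite drop_size_cat. Qed.

Lemma val2K : cancel (fun t : 2.-tuple bool => val2 t) tuple2.
Proof. by move=> t; apply: val_inj; case: t => [[|a [|b []]] //= _]; case: a; case: b. Qed.

Section CoinShift.

Variable I : finType.
Implicit Types (r : {ffun I -> 2.-tuple bool}) (v w : I).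

Definition coin r v : nat := val2 (r v).

Lemma coin_lt4 r v : coin r v < 4.
Proof. exact: val2_lt4. Qed.

Definition shift_coin w (j : nat) r : {ffun I -> 2.-tuple bool} :=
  [ffun v => if v == w then tuple2 (coin r w + j) else r v].

Lemma coin_shift w j r v :
  coin (shift_coin w j r) v = if v == w then (coin r w + j) %% 4 else coin r v.
Proof. by rewrite /coin ffunE; case: eqP => // _; apply: val2_bits2. Qed.

Lemma coin_eq r s v : coin r v = coin s v -> r v = s v.
Proof. by rewrite /coin => /(congr1 tuple2); rewrite !val2K. Qed.

Lemma shift_coin_inj w j : injective (shift_coin w j).
Proof.
move=> r s E; apply/ffunP => v; apply: coin_eq.
have := coin_shift w j r v; rewrite E coin_shift; case: eqP => [-> | _ <-] //.
by have := coin_lt4 r w; have := coin_lt4 s w; lia.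
Qed.

Lemma card_coin_space_gt0 : 0 < #|{ffun I -> 2.-tuple bool}|.
Proof. by apply/card_gt0P; exists [ffun=> tuple2 0]. Qed.

Lemma card_coin_event_lt w (phi : {ffun I -> 2.-tuple bool} -> nat)
    (A : pred {ffun I -> 2.-tuple bool}) :
  (forall r j, j < 4 -> phi r = 0 -> phi (shift_coin w j r) = j) ->
  (forall r, A r -> phi r = 0) -> 3 * #|A| < #|{ffun I -> 2.-tuple bool}|.
Proof.
move=> phi_shift A_phi.
have fiber_le := @card_fiber0_le _ 4 phi _ (@shift_coin_inj w) phi_shift.
have A_le : #|A| <= #|[pred r | phi r == 0]|.
  by apply: subset_leq_card; apply/subsetP => r /A_phi r0; rewrite inE /= r0.
case: (posnP #|A|) => [-> | A_gt0]; first exact: card_coin_space_gt0.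
apply: leq_trans fiber_le; apply: leq_trans (leq_mul (leqnn 4) A_le); lia.
Qed.

End CoinShift.

Definition label (s : seq bool) : nat := val2 s %% 3.
Definition root_coin (s : seq bool) : nat := val2 (drop 2 s).

(* The first prover message is a label, the second is the path sum followed by
   the leader's coin (two bits each); the parent is the first neighbour whose
   label is one less modulo 3. *)
Definition leader_decide (V : view) : bool :=
  let c := val2 (v_coins V) in
  let nbrs := v_nbr_msgs V in
  let p := find (fun t => label t.1 == (label (v_msg1 V) + 2) %% 3) nbrs in
  all (fun t => root_coin t.2 == root_coin (v_msg2 V)) nbrs &&
  if v_input V then (val2 (v_msg2 V) == c) && (root_coin (v_msg2 V) == c)
  else (p < size nbrs) &&
       (val2 (v_msg2 V) == (c + val2 (nth ([::], [::]) nbrs p).2) %% 4).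

Definition leader_protocol : dMAM_protocol := DMAMProtocol (fun=> 2) leader_decide.

Section LocalAcceptance.

Variables (n : nat) (ports : 'I_n -> seq 'I_n) (inp : 'I_n -> bool).
Variable m1 : 'I_n -> seq bool.

Definition parent_cand (v u : 'I_n) : bool := label (m1 u) == (label (m1 v) + 2) %% 3.

Definition parent (v : 'I_n) : 'I_n := nth v (ports v) (find (parent_cand v) (ports v)).

Definition accepts_at (m2 : 'I_n -> seq bool) (c : 'I_n -> nat) (v : 'I_n) : bool :=
  all (fun u => root_coin (m2 u) == root_coin (m2 v)) (ports v) &&
  if inp v then (val2 (m2 v) == c v) && (root_coin (m2 v) == c v)
  else has (parent_cand v) (ports v) &&
       (val2 (m2 v) == (c v + val2 (m2 (parent v))) %% 4).

Lemma all_acceptE (id : 'I_n -> nat)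
    (m2 : coin_space leader_protocol n -> 'I_n -> seq bool) (r : coin_space leader_protocol n) :
  all_accept ports id inp m1 m2 r = [forall v, accepts_at (m2 r) (coin r) v].
Proof.
apply: eq_forallb => v; rewrite /= /leader_decide /accepts_at /= all_map.
case: (inp v) => //; rewrite find_map size_map -has_find.
by case: hasP => //= has_parent; rewrite (nth_map v) // -has_find; apply/hasP.
Qed.

End LocalAcceptance.

Section AcceptingRun.

Variables (n : nat) (ports : 'I_n -> seq 'I_n) (inp : 'I_n -> bool).
Variables (m1 m2 : 'I_n -> seq bool) (c : 'I_n -> nat).
Hypothesis accept : forall v, accepts_at ports inp m1 m2 c v.

Local Notation parent := (parent ports m1).

Lemma accept_root_coin v u : u \in ports v -> root_coin (m2 u) = root_coin (m2 v).
Proof. by have /andP [/allP agree _] := accept v => /agree /eqP. Qed.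

Lemma accept_root_coin_connect (e : rel 'I_n) x y :
  (forall v u, (u \in ports v) = e v u) -> connect e x y ->
  root_coin (m2 y) = root_coin (m2 x).
Proof.
move=> portsE /connectP [p x_p ->]; elim: p x x_p => //= z p IH x /andP [e_xz z_p].
by rewrite IH //; apply: accept_root_coin; rewrite portsE.
Qed.

Lemma accept_leader v : inp v -> root_coin (m2 v) = c v.
Proof. by have /andP [_] := accept v => + inp_v; rewrite inp_v => /andP [_ /eqP]. Qed.

Lemma accept_follower v : ~~ inp v -> val2 (m2 v) = (c v + val2 (m2 (parent v))) %% 4.
Proof. by have /andP [_] := accept v => + /negbTE inp_v; rewrite inp_v => /andP [_ /eqP]. Qed.

Lemma accept_iter_parent (w : 'I_n) k : (forall v, ~~ inp v) ->
  val2 (m2 w) = (\sum_(t < k) c (iter t parent w) + val2 (m2 (iter k parent w))) %% 4.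
Proof.
move=> no_leader; elim: k => [|k IH]; first by rewrite big_ord0 modn_small ?val2_lt4.
by rewrite IH big_ord_recr /= accept_follower // modnDmr addnA.
Qed.

End AcceptingRun.

Lemma sound_no_leader n ports (id : 'I_n -> nat) inp m1
    (m2 : coin_space leader_protocol n -> 'I_n -> seq bool) :
  0 < n -> (forall v, ~~ inp v) ->
  3 * n_accept ports id inp m1 m2 < #|coin_space leader_protocol n|.
Proof.
move=> n_gt0 no_leader; pose f := parent ports m1.
have [w [k [k_gt0 cycle_w simple_w]]] := iter_minimal_cycle f (Ordinal n_gt0).
case: k k_gt0 cycle_w simple_w => // k _ cycle_w simple_w.
pose phi r := (\sum_(t < k.+1) coin r (iter t f w)) %% 4.
apply: (card_coin_event_lt (w := w) (phi := phi)).
- move=> r j j_lt4; rewrite /phi !big_ord_recl /= !coin_shift eqxx => phi0.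
  under eq_bigr => t _
    do rewrite coin_shift add0n -iterS (negbTE (simple_w t.+1 (ltn_ord t))).
  move: phi0; under eq_bigr do rewrite add0n -iterS.
  by have := coin_lt4 r w; lia.
- move=> r; rewrite inE all_acceptE => /forallP accept.
  have := accept_iter_parent accept w k.+1 no_leader; rewrite cycle_w /phi.
  by rewrite /f; have := val2_lt4 (m2 r w); lia.
Qed.

Lemma sound_two_leaders n (e : rel 'I_n) ports (id : 'I_n -> nat) (inp : 'I_n -> bool) m1
    (m2 : coin_space leader_protocol n -> 'I_n -> seq bool) u w :
  (forall x y, connect e x y) -> (forall v x, (x \in ports v) = e v x) ->
  inp u -> inp w -> u != w ->
  3 * n_accept ports id inp m1 m2 < #|coin_space leader_protocol n|.
Proof.
move=> e_conn portsE inp_u inp_w uw.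
pose phi r := (coin r w + 4 - coin r u) %% 4.
apply: (card_coin_event_lt (w := w) (phi := phi)).
- move=> r j j_lt4; rewrite /phi !coin_shift eqxx (negbTE uw).
  by have := coin_lt4 r w; have := coin_lt4 r u; lia.
- move=> r; rewrite inE all_acceptE => /forallP accept.
  have := accept_root_coin_connect accept portsE (e_conn u w).
  rewrite !(accept_leader accept) // /phi => ->.
  by have := coin_lt4 r u; lia.
Qed.

Section HonestProver.

Variables (n : nat) (e : rel 'I_n) (ports : 'I_n -> seq 'I_n) (l : 'I_n).
Hypotheses (e_sym : symmetric e) (e_conn : forall x y, connect e x y).
Hypothesis portsE : forall v x, (x \in ports v) = e v x.

Local Notation d := (dist (e_conn l)).

Definition honest_m1 (v : 'I_n) : seq bool := bits2 (d v %% 3).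

Local Notation f := (parent ports honest_m1).

Lemma honest_parent v :
  v != l -> has (parent_cand honest_m1 v) (ports v) /\ (d (f v)).+1 = d v.
Proof.
move=> vl; have [u e_uv du] := dist_pred (e_conn l) vl.
have candE x : parent_cand honest_m1 v x = (d x %% 3 == (d v %% 3 + 2) %% 3).
  by rewrite /parent_cand /label !val2_bits2; apply/eqP/eqP; lia.
have has_cand : has (parent_cand honest_m1 v) (ports v).
  by apply/hasP; exists u; [rewrite portsE e_sym | rewrite candE -du; apply/eqP; lia].
split => //.
have e_vf : e v (f v) by rewrite -portsE /parent mem_nth // -has_find.
have := nth_find v has_cand; rewrite -/(f v) candE => /eqP f_cand.
have := dist_edge (e_conn l) e_vf.
have := dist_edge (e_conn l) (etrans (e_sym _ _) e_vf).
lia.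
Qed.

Definition honest_sum (r : {ffun 'I_n -> 2.-tuple bool}) (v : 'I_n) : nat :=
  (\sum_(t < (d v).+1) coin r (iter t f v)) %% 4.

Lemma honest_sum_root r : honest_sum r l = coin r l.
Proof. by rewrite /honest_sum dist_root big_ord1 modn_small ?coin_lt4. Qed.

Lemma honest_sum_parent r v :
  v != l -> honest_sum r v = (coin r v + honest_sum r (f v)) %% 4.
Proof.
move=> vl; have [_ d_fv] := honest_parent vl.
rewrite /honest_sum -d_fv big_ord_recl modnDmr.
by under eq_bigr => t _ do rewrite /= add0n -iterS iterSr.
Qed.

Definition honest_m2 (r : coin_space leader_protocol n) (v : 'I_n) : seq bool :=
  bits2 (honest_sum r v) ++ bits2 (coin r l).

Lemma honest_accepts (inp : 'I_n -> bool) r v : (forall v, inp v = (v == l)) ->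
  accepts_at ports inp honest_m1 (honest_m2 r) (coin r) v.
Proof.
move=> inpE; rewrite /accepts_at /honest_m2 /root_coin inpE !drop2_cat.
apply/andP; split; first by apply/allP => u _; rewrite drop2_cat.
rewrite !val2_cat; case: eqP => [-> | /eqP vl].
  by rewrite honest_sum_root !modn_small ?coin_lt4 // eqxx.
have [has_cand _] := honest_parent vl.
by rewrite has_cand honest_sum_parent // modn_mod modnDmr eqxx.
Qed.

End HonestProver.

Lemma complete_unique_leader n (e : rel 'I_n) ports (id : 'I_n -> nat)
    (inp : 'I_n -> bool) l :
  symmetric e -> (forall x y, connect e x y) -> (forall v x, (x \in ports v) = e v x) ->
  (forall v, inp v = (v == l)) ->
  exists (m1 : 'I_n -> seq bool) (m2 : coin_space leader_protocol n -> 'I_n -> seq bool),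
    [/\ (forall v, size (m1 v) <= 4), (forall r v, size (m2 r v) <= 4) &
        2 * #|coin_space leader_protocol n| < 3 * n_accept ports id inp m1 m2].
Proof.
move=> e_sym e_conn portsE inpE.
exists (honest_m1 l e_conn), (honest_m2 ports l e_conn); split => //.
have -> : n_accept ports id inp (honest_m1 l e_conn) (honest_m2 ports l e_conn)
          = #|coin_space leader_protocol n|.
  apply: eq_card => r; rewrite inE all_acceptE; apply/forallP => v.
  exact: honest_accepts.
by rewrite ltn_pmul2r // card_coin_space_gt0.
Qed.

Theorem corollary1p7 : forall c : nat, in_dMAM_O1 c LeaderElection.
Proof.
move=> c; exists 4, leader_protocol; split => // n e ports id inp.
move=> [n_gt0 [e_sym [_ [e_conn [ports_ok _]]]]].
have portsE v x : (x \in ports v) = e v x by case: (ports_ok v).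
rewrite /LeaderElection; split => [one_leader | not_one m1 m2].
- have [l inp_l] : exists l, l \in [pred v | inp v] by apply/card_gt0P; rewrite one_leader.
  apply: (complete_unique_leader id e_sym e_conn portsE (l := l)) => v.
  by have /card_le1P /(_ l inp_l v) := eq_leq one_leader; rewrite !inE.
- case: (posnP #|[pred v | inp v]|) => [no_leader | some_leader].
    by apply: sound_no_leader => // v; have := card0_eq no_leader v; rewrite !inE => ->.
  have /card_gt1P [u [w [inp_u inp_w uw]]] : 1 < #|[pred v | inp v]|.
    by move: not_one some_leader; lia.
  exact: sound_two_leaders e_conn portsE inp_u inp_w uw.
Qed.
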